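(* Suppose $n$ qubits are distributed among a finite set of parties $M$, $n=\sum_{\alpha\in M}n_\alpha$, and let $S,S'\subseteq G^n$ be arbitrary linear subspaces. The following are equivalent: (1) there exist $u_\alpha\in\mathrm{Sp}(n_\alpha)$, $\alpha\in M$, such that $S'=\big(\bigoplus_{\alpha\in M}u_\alpha\big)\cdot S$, where the direct sum refers to the decomposition $G^n=\bigoplus_{\alpha\in M}G^{n_\alpha}$ into the parties' local subspaces; (2) there exists a linear invertible map $T:S\to S'$ such that (i) $\omega(T(f)_\alpha,T(g)_\alpha)=\omega(f_\alpha,g_\alpha)$ for all $f,g\in S$ and $\alpha\in M$, and (ii) $T\cdot S_{\hat\alpha}=S'_{\hat\alpha}$ for all $\alpha\in M$.
   Context: Let $G^n\cong\mathbb{F}_2^{2n}$, with elements written $f=(a_1,b_1,\dots,a_n,b_n)$, equipped with the symplectic form $\omega(f,f')=\sum_{j=1}^n(a_jb_j'+b_ja_j')\bmod 2$. $\mathrm{Sp}(n)$ denotes the group of linear bijections $u:G^n\to G^n$ with $\omega(u(f),u(g))=\omega(f,g)$ for all $f,g$. When party $\alpha\in M$ holds $n_\alpha$ of the $n$ qubits, $G^n=\bigoplus_\alpha G^{n_\alpha}$ (coordinates $(a_j,b_j)$ grouped by the owner of qubit $j$), $f_\alpha\in G^{n_\alpha}$ denotes the component of $f$ for party $\alpha$, and $\omega(f_\alpha,g_\alpha)$ is the symplectic form of $G^{n_\alpha}$. For a subspace $S\subseteq G^n$, the co-local subspace is $S_{\hat\alpha}=\{g\in S:g_\alpha=0\}$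 (equal to $S$ if $n_\alpha=0$). *)

From HB Require Import structures.
From mathcomp Require Import all_boot all_order all_algebra.
Set Implicit Arguments. Unset Strict Implicit. Unset Printing Implicit Defensive.
Import GRing.Theory.
Local Open Scope ring_scope.

(* G over a finite index set I of qubits: each qubit j carries (a_j, b_j),
   stored as the row vector [a_j b_j] : 'rV['F_2]_2. G^n = G 'I_n. *)
Definition G (I : finType) := {ffun I -> 'rV['F_2]_2}.

Definition acoord (I : finType) (f : G I) (j : I) : 'F_2 := f j 0 0.
Definition bcoord (I : finType) (f : G I) (j : I) : 'F_2 := f j 0 1.

Definition omega (I : finType) (f g : G I) : 'F_2 :=
  \sum_(j : I) (acoord f j * bcoord g j + bcoord f j * acoord g j).

Definition is_Sp (I : finType) (u : G I -> G I) : Prop :=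
  [/\ linear u, bijective u & forall f g, omega (u f) (u g) = omega f g].

Definition Qub (n : nat) (M : finType) (own : 'I_n -> M) (alpha : M) : finType :=
  {j : 'I_n | own j == alpha}.

Definition loc_comp (n : nat) (M : finType) (own : 'I_n -> M) (alpha : M)
  (f : G 'I_n) : G (Qub own alpha) := [ffun j => f (sval j)].

Definition dsum (n : nat) (M : finType) (own : 'I_n -> M)
  (u : forall alpha : M, G (Qub own alpha) -> G (Qub own alpha))
  (f : G 'I_n) : G 'I_n :=
  [ffun j => u (own j) (loc_comp own (own j) f)
                 (exist (fun k : 'I_n => own k == own j) j (eqxx (own j)))].

Arguments Qub {n M} own alpha.
Arguments loc_comp {n M} own alpha f.
Arguments dsum {n M} own u f.
Arguments omega {I} f g.
Arguments is_Sp {I} u.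

From HB Require Import structures.
From mathcomp Require Import all_boot all_order all_algebra.
From mathcomp Require Import ring.
From Stdlib Require Import ClassicalEpsilon.
Import GRing.Theory.
Local Open Scope ring_scope.
Set Implicit Arguments. Unset Strict Implicit. Unset Printing Implicit Defensive.

(* The direction (1) => (2) is bookkeeping: T is the restriction of the direct
   sum of the u_alpha.  For (2) => (1), fix a party alpha.  Condition (ii) says
   exactly that f_alpha = 0 iff (T f)_alpha = 0 for f in S, so the assignment
   f_alpha |-> (T f)_alpha is a well defined injective map on the local
   projection of S, and by (i) it preserves omega.  By Witt's theorem it extends
   to some u_alpha in Sp(n_alpha), and the direct sum of the u_alpha then agrees
   with T on S.  Witt's theorem over F_2 is proved by induction on a spanning
   family: each new vector is moved onto its prescribed image by at most two
   symplectic transvections v |-> v + omega(d, v) d fixing the span of the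
   previous ones. *)

Lemma F2_cases (k : 'F_2) : k = 0 \/ k = 1.
Proof. by case: k => [[|[|m]] lt_m2]; [left | right | ]; try apply/val_inj. Qed.

Lemma addrr_F2 (k : 'F_2) : k + k = 0.
Proof. by rewrite addrr_pchar2 // pchar_Fp. Qed.

Lemma addvv_F2 (V : lmodType 'F_2) (v : V) : v + v = 0.
Proof. by rewrite -[v]scale1r -scalerDl addrr_F2 scale0r. Qed.

Section SymplecticForm.
Variable I : finType.
Implicit Types x y z : G I.

Fact omega_is_scalar x : scalar (omega x).
Proof.
move=> k y z; rewrite /omega mulr_sumr -big_split /=; apply: eq_bigr => j _.
by rewrite /acoord /bcoord !ffunE !mxE; ring.
Qed.

HB.instance Definition _ x :=
  GRing.isSemilinear.Build 'F_2 (G I) 'F_2 _ (omega x)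
    (GRing.semilinear_linear (omega_is_scalar x)).

Lemma omegaC x y : omega x y = omega y x.
Proof. by apply: eq_bigr => j _; rewrite addrC mulrC [_ * acoord x j]mulrC. Qed.

Lemma omegaDl x y z : omega (x + y) z = omega x z + omega y z.
Proof. by rewrite omegaC linearD /= !(omegaC z). Qed.

Lemma omegaZl k x y : omega (k *: x) y = k * omega x y.
Proof. by rewrite omegaC linearZ /= omegaC. Qed.

Lemma omega0l y : omega 0 y = 0.
Proof. by rewrite omegaC linear0. Qed.

Lemma omegaxx x : omega x x = 0.
Proof.
by rewrite /omega big1 // => j _; rewrite [_ * acoord x j]mulrC addrr_F2.
Qed.

Definition unit_vec (j : I) (i : 'I_2) : G I :=
  [ffun j' => if j' == j then delta_mx 0 i else 0].

Lemma G_expand y :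
  y = \sum_j (acoord y j *: unit_vec j 0 + bcoord y j *: unit_vec j 1).
Proof.
apply/ffunP => j; rewrite sum_ffunE (bigD1 j) //= big1 => [|j' /negbTE nj'j]; last first.
  by rewrite !ffunE eq_sym nj'j !scaler0 addr0.
rewrite !ffunE eqxx addr0; apply/rowP => i; rewrite !mxE /acoord /bcoord.
by case: i => [[|[|i]] lt_i2] //=; rewrite ?mulr1 ?mulr0 ?addr0 ?add0r;
  congr (y j 0 _); apply: val_inj.
Qed.

Lemma omega_riesz (phi : G I -> 'F_2) : scalar phi -> exists x, omega x =1 phi.
Proof.
move=> phi_lin.
pose phiL : {scalar G I} := HB.pack phi (GRing.isLinear.Build _ _ _ _ phi phi_lin).
exists [ffun j => phi (unit_vec j 1) *: delta_mx 0 0 + phi (unit_vec j 0) *: delta_mx 0 1].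
move=> y; rewrite {2}(G_expand y) -[phi _]/(phiL _) linear_sum; apply: eq_bigr => j _.
rewrite linearD !linearZ /= /acoord /bcoord !ffunE !mxE /=.
by rewrite !mulr1 !mulr0 addr0 add0r; ring.
Qed.

Lemma omega_prescribe (X : seq (G I)) (c : G I -> 'F_2) :
  free X -> exists x, {in X, forall y, omega x y = c y}.
Proof.
move=> freeX; pose phi y := \sum_(i < size X) c X`_i * coord (in_tuple X) i y.
have [|x omega_x] := @omega_riesz phi.
  move=> k y z; rewrite /phi mulr_sumr -big_split /=; apply: eq_bigr => i _.
  by rewrite linearP /= mulrDr mulrCA.
exists x => y Xy; rewrite omega_x /phi -(nth_index 0 Xy).
have iX : (index y X < size X)%N by rewrite index_mem.
rewrite (bigD1 (Ordinal iX)) //= big1 => [|i ne_i].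
  by rewrite (coord_free (Ordinal iX)) // eqxx mulr1 addr0.
by rewrite (coord_free (Ordinal iX)) // eq_sym (negbTE ne_i) mulr0.
Qed.

Lemma omega_eq_span (X : seq (G I)) x y :
  {in X, omega x =1 omega y} -> {in <<X>>%VS, omega x =1 omega y}.
Proof.
move=> eq_xy z /(coord_span (X := in_tuple X)) ->; rewrite !linear_sum.
by apply: eq_bigr => i _; rewrite !linearZ /= eq_xy // mem_nth.
Qed.

End SymplecticForm.

Section SymplecticGroup.
Variable I : finType.
Implicit Types (a b d v x y z : G I) (u w : G I -> G I).

Lemma Sp_id : is_Sp (@id (G I)).
Proof. by split=> //; exists id. Qed.

Lemma Sp_comp u w : is_Sp u -> is_Sp w -> is_Sp (u \o w).
Proof.
case=> lin_u bij_u omega_u [lin_w bij_w omega_w].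
split=> [k x y | | x y] /=; last by rewrite omega_u omega_w.
  by rewrite lin_w lin_u.
exact: bij_comp.
Qed.

Lemma Sp_map0 u : is_Sp u -> u 0 = 0.
Proof.
case=> lin_u _ _; have := lin_u 1 0 0; rewrite !scale1r addr0 => u00.
by apply: (addrI (u 0)); rewrite addr0 -u00.
Qed.

Definition transvection d v : G I := v + omega d v *: d.

Lemma transvection_fix d v : omega d v = 0 -> transvection d v = v.
Proof. by rewrite /transvection => ->; rewrite scale0r addr0. Qed.

Lemma transvection_shift d v : omega d v = 1 -> transvection d v = v + d.
Proof. by rewrite /transvection => ->; rewrite scale1r. Qed.

Lemma transvectionK d : involutive (transvection d).
Proof.
move=> v; rewrite {1}/transvection linearD linearZ /= omegaxx mulr0 addr0.
by rewrite /transvection -addrA addvv_F2 addr0.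
Qed.

Lemma transvection_Sp d : is_Sp (transvection d).
Proof.
split=> [k x y | | x y].
- by rewrite /transvection linearP /= scalerDl -scalerA scalerDr addrACA.
- by exists (transvection d); apply: transvectionK.
rewrite /transvection omegaDl !linearD !linearZ /= !omegaZl omegaxx.
by rewrite (omegaC x d) !mulr0 addr0 [omega d y * _]mulrC -addrA addrr_F2 addr0.
Qed.

Lemma omega_orth_witness (U : {vspace G I}) a b : a \notin U -> b \notin U ->
  exists y, [/\ {in U, forall z, omega y z = 0}, omega y a = 1 & omega y b = 1].
Proof.
move=> aU bU; pose X := vbasis U.
have spanX : <<X>>%VS = U := span_basis (vbasisP U).
have freeaX : free (a :: X) by rewrite free_cons spanX aU (basis_free (vbasisP U)).
pose c z : 'F_2 := if z \in U then 0 else 1.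
have orthU y : {in X, forall z, omega y z = c z} -> {in U, forall z, omega y z = 0}.
  move=> yX z zU; rewrite -(omega0l z).
  apply: (omega_eq_span (X := X)); last by rewrite spanX.
  by move=> z' Xz'; rewrite yX // /c omega0l -spanX memv_span.
have cU z : z \notin U -> c z = 1 by rewrite /c => /negbTE ->.
have [baX | nbaX] := boolP (b \in <<a :: X>>%VS).
  have [y yc] := omega_prescribe c freeaX.
  have yU : {in U, forall z, omega y z = 0}.
    by apply: orthU => z Xz; rewrite yc // inE Xz orbT.
  have ya : omega y a = 1 by rewrite yc ?mem_head ?cU.
  exists y; split=> //; move: baX bU; rewrite span_cons spanX.
  case/memv_addP=> _ /vlineP[k ->] [z zU ->]; case: (F2_cases k) => ->.
    by rewrite scale0r add0r zU.
  by rewrite scale1r linearD /= ya yU ?addr0.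
have freebaX : free (b :: a :: X) by rewrite free_cons nbaX freeaX.
have [y yc] := omega_prescribe c freebaX.
exists y; split; first by apply: orthU => z Xz; rewrite yc // !inE Xz !orbT.
  by rewrite yc ?cU // !inE eqxx orbT.
by rewrite yc ?cU ?mem_head.
Qed.

Lemma Sp_transport (U : {vspace G I}) a b : a \notin U -> b \notin U ->
  {in U, omega a =1 omega b} -> exists w, [/\ is_Sp w, {in U, w =1 id} & w a = b].
Proof.
move=> aU bU eq_ab.
have orth_ab : {in U, forall z, omega (a + b) z = 0}.
  by move=> z zU; rewrite omegaDl eq_ab ?addrr_F2.
have [omega_ab | omega_ab] := F2_cases (omega a b).
  (* a |-> a + y |-> b, where y is orthogonal to U and pairs to 1 with a and b *)
  have [y [yU ya yb]] := omega_orth_witness aU bU.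
  exists (transvection (a + b + y) \o transvection y); split.
  - by apply: Sp_comp; apply: transvection_Sp.
  - move=> z zU /=; rewrite (transvection_fix (yU z zU)) transvection_fix //.
    by rewrite omegaDl orth_ab ?yU ?addr0.
  rewrite /= (transvection_shift ya) transvection_shift; last first.
    rewrite !omegaDl !linearD /= !omegaxx (omegaC a y) (omegaC b a) (omegaC b y).
    by rewrite ya yb omega_ab add0r addr0 addrr_F2 add0r.
  by rewrite addrACA addvv_F2 addr0 addrA addvv_F2 add0r.
exists (transvection (a + b)); split.
- exact: transvection_Sp.
- by move=> z zU /=; rewrite transvection_fix ?orth_ab.
rewrite transvection_shift; last by rewrite omegaDl omegaxx add0r omegaC.
by rewrite addrA addvv_F2 add0r.
Qed.

End SymplecticGroup.

Lemma memv_span_mapP (K : fieldType) (U V : vectType K) (f : {linear U -> V})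
    (X : seq U) (z : V) :
  reflect (exists2 x, x \in <<X>>%VS & z = f x) (z \in <<map f X>>%VS).
Proof.
have <- : map (linfun f) X = map f X by apply: eq_map; apply: lfunE.
rewrite -limg_span; apply: (iffP memv_imgP) => -[x Xx ->]; exists x; rewrite ?lfunE //.
Qed.

Section WittExtension.
Variables (J I : finType) (p q : {linear G J -> G I}).

Lemma witt_step (s : seq (G J)) (w : G J) (u : G I -> G I) :
  {in <<w :: s>>%VS, forall x, (p x == 0) = (q x == 0)} ->
  {in <<w :: s>>%VS &, forall x y, omega (q x) (q y) = omega (p x) (p y)} ->
  is_Sp u -> {in <<s>>%VS, forall x, u (p x) = q x} ->
  exists v, [/\ is_Sp v, {in <<s>>%VS, forall x, v (p x) = p x} & u (v (p w)) = q w].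
Proof.
move=> ker iso [lin_u [g uK Ku] omega_u] eq_u.
have ws : w \in <<w :: s>>%VS by rewrite memv_span ?mem_head.
have sub_s : {subset <<s>>%VS <= <<w :: s>>%VS}.
  by move=> z; rewrite span_cons; apply: subvP; apply: addvSr.
have eq_pq z : z \in <<s>>%VS -> (p w == p z) = (q w == q z).
  move=> zs; rewrite -(subr_eq0 (p w)) -(subr_eq0 (q w)) -!linearB.
  by rewrite ker // memvB // sub_s.
have [/memv_span_mapP[z zs pwz] | pwU] := boolP (p w \in <<map p s>>%VS).
  exists id; split=> //; first exact: Sp_id.
  by apply/eqP; rewrite pwz eq_u // eq_sym -eq_pq // pwz.
have gU : g (q w) \notin <<map p s>>%VS.
  apply: contra pwU => /memv_span_mapP[z zs /(congr1 u)]; rewrite Ku eq_u // => qwz.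
  by apply/memv_span_mapP; exists z => //; apply/eqP; rewrite eq_pq // qwz.
(* p w is new modulo the image of <<s>>: move it onto u^-1 (q w) *)
have [|v [Sp_v fix_v vpw]] := Sp_transport pwU gU.
  move=> _ /memv_span_mapP[z zs ->].
  by rewrite -iso ?(sub_s z zs) // -[RHS]omega_u Ku eq_u.
exists v; split=> // [x xs|]; last by rewrite vpw Ku.
by rewrite fix_v //; apply/memv_span_mapP; exists x.
Qed.

Lemma witt_extension (s : seq (G J)) :
  {in <<s>>%VS, forall x, (p x == 0) = (q x == 0)} ->
  {in <<s>>%VS &, forall x y, omega (q x) (q y) = omega (p x) (p y)} ->
  exists u, is_Sp u /\ {in <<s>>%VS, forall x, u (p x) = q x}.
Proof.
elim: s => [|w s IHs] ker iso.
  exists id; split=> [|x]; first exact: Sp_id.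
  by rewrite span_nil memv0 => /eqP ->; rewrite !linear0.
have sub_s : {subset <<s>>%VS <= <<w :: s>>%VS}.
  by move=> z; rewrite span_cons; apply: subvP; apply: addvSr.
have [u [Sp_u eq_u]] := IHs (sub_in1 sub_s ker) (sub_in2 sub_s iso).
have [v [Sp_v fix_v uvw]] := witt_step ker iso Sp_u eq_u.
exists (u \o v); split; first exact: Sp_comp.
move=> x; rewrite span_cons => /memv_addP[_ /vlineP[k ->] [z zs ->]] /=.
case: Sp_v Sp_u => lin_v _ _ [lin_u _ _].
by rewrite !linearP lin_v (fix_v z zs) lin_u uvw eq_u.
Qed.

End WittExtension.

Section LocalMaps.
Variables (M : finType) (n : nat) (own : 'I_n -> M).
Implicit Types u v : forall alpha : M, G (Qub own alpha) -> G (Qub own alpha).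

Fact loc_comp_is_linear alpha : linear (loc_comp own alpha).
Proof. by move=> k x y; apply/ffunP => j; rewrite !ffunE. Qed.

HB.instance Definition _ alpha :=
  GRing.isLinear.Build 'F_2 (G 'I_n) (G (Qub own alpha)) _ (loc_comp own alpha)
    (loc_comp_is_linear alpha).

Lemma loc_comp_dsum u alpha x :
  loc_comp own alpha (dsum own u x) = u alpha (loc_comp own alpha x).
Proof.
apply/ffunP => -[j own_j]; rewrite !ffunE /=; have alpha_j := eqP own_j; subst alpha.
by rewrite (bool_irrelevance own_j (eqxx (own j))).
Qed.

Lemma dsum_eq u x y :
  (forall alpha, u alpha (loc_comp own alpha x) = loc_comp own alpha y) ->
  dsum own u x = y.
Proof. by move=> eq_u; apply/ffunP => j; rewrite ffunE eq_u ffunE. Qed.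

Lemma dsum_linear u : (forall alpha, linear (u alpha)) -> linear (dsum own u).
Proof.
move=> lin_u k x y; apply: dsum_eq => alpha.
by rewrite !linearP /= lin_u !loc_comp_dsum.
Qed.

Lemma dsum_can u v : (forall alpha, cancel (u alpha) (v alpha)) ->
  cancel (dsum own u) (dsum own v).
Proof. by move=> uK x; apply: dsum_eq => alpha; rewrite loc_comp_dsum uK. Qed.

Definition local_Sp_equivalent (S S' : {vspace G 'I_n}) : Prop :=
  exists u, (forall alpha, is_Sp (u alpha)) /\
            (forall y : G 'I_n, y \in S' <-> exists2 x, x \in S & y = dsum own u x).

Definition locally_isometric (S S' : {vspace G 'I_n}) : Prop :=
  exists T : subvs_of S -> subvs_of S',
  [/\ linear T, bijective T,
      (forall (f g : subvs_of S) (alpha : M),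
         omega (loc_comp own alpha (vsval (T f))) (loc_comp own alpha (vsval (T g)))
         = omega (loc_comp own alpha (vsval f)) (loc_comp own alpha (vsval g)))
    & (forall (alpha : M) (y : subvs_of S'),
         loc_comp own alpha (vsval y) = 0 <->
         exists x : subvs_of S, loc_comp own alpha (vsval x) = 0 /\ T x = y)].

Lemma local_Sp_equivalent_isometric S S' :
  local_Sp_equivalent S S' -> locally_isometric S S'.
Proof.
case=> u [Sp_u eq_S'].
have inj_u alpha : injective (u alpha) by case: (Sp_u alpha) => _ /bij_inj.
have lin_u alpha : linear (u alpha) by case: (Sp_u alpha).
pose ui alpha := finv (u alpha).
have uK : cancel (dsum own u) (dsum own ui).
  exact: dsum_can (fun alpha => finv_f (inj_u alpha)).
have Ku : cancel (dsum own ui) (dsum own u).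
  exact: dsum_can (fun alpha => f_finv (inj_u alpha)).
have uS x : x \in S -> dsum own u x \in S' by move=> xS; apply/eq_S'; exists x.
have uiS' y : y \in S' -> dsum own ui y \in S by case/eq_S' => x xS ->; rewrite uK.
pose T (x : subvs_of S) := vsproj S' (dsum own u (vsval x)).
pose Ti (y : subvs_of S') := vsproj S (dsum own ui (vsval y)).
have TE x : vsval (T x) = dsum own u (vsval x) by rewrite vsprojK ?uS ?subvsP.
have TiE y : vsval (Ti y) = dsum own ui (vsval y) by rewrite vsprojK ?uiS' ?subvsP.
have TK : cancel T Ti by move=> x; apply: val_inj; rewrite /= TiE TE uK.
have TiK : cancel Ti T by move=> y; apply: val_inj; rewrite /= TE TiE Ku.
exists T; split.
- by move=> k x y; apply: val_inj; rewrite /= !TE linearP (dsum_linear lin_u).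
- by exists Ti.
- by move=> x y alpha; rewrite !TE !loc_comp_dsum; case: (Sp_u alpha) => _ _ ->.
move=> alpha y; split => [y0 | [x [x0 <-]]]; last by rewrite TE loc_comp_dsum x0 Sp_map0.
exists (Ti y); split => //; apply: (inj_u alpha).
by rewrite -loc_comp_dsum -TE TiK y0 Sp_map0.
Qed.

Lemma locally_isometric_Sp_equivalent S S' :
  locally_isometric S S' -> local_Sp_equivalent S S'.
Proof.
case=> T [lin_T [Ti TK TiK] omega_T ker_T].
pose Tf x := vsval (T (vsproj S x)).
have lin_Tf : linear Tf by move=> k x y; rewrite /Tf !linearP lin_T linearP.
have local alpha : exists ua, is_Sp ua /\
    {in S, forall x, ua (loc_comp own alpha x) = loc_comp own alpha (Tf x)}.
  have lin_q : linear (loc_comp own alpha \o Tf).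
    by move=> k x y; rewrite /= lin_Tf linearP.
  pose q : {linear G 'I_n -> G (Qub own alpha)} :=
    HB.pack (loc_comp own alpha \o Tf) (GRing.isLinear.Build _ _ _ _ _ lin_q).
  have spanS : <<vbasis S>>%VS = S := span_basis (vbasisP S).
  have [||ua [Sp_ua eq_ua]] :=
      witt_extension (p := loc_comp own alpha) (q := q) (s := vbasis S);
    rewrite ?spanS /q /Tf /=.
  - move=> x xS; apply/eqP/eqP => [x0 | /ker_T[x' [x'0 /(can_inj TK) x'E]]].
      by apply/(ker_T alpha); exists (vsproj S x); rewrite vsprojK.
    by rewrite x'E vsprojK in x'0.
  - by move=> x y xS yS; rewrite omega_T !vsprojK.
  by exists ua; split=> // x xS; apply: eq_ua; rewrite spanS.
have [u Hu] := all_sig (fun alpha => constructive_indefinite_description _ (local alpha)).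
have dsumE : {in S, dsum own u =1 Tf}.
  by move=> x xS; apply: dsum_eq => alpha; case: (Hu alpha) => _ ->.
exists u; split => [alpha | y]; first by case: (Hu alpha).
split => [yS' | [x xS ->]]; last by rewrite dsumE ?subvsP.
exists (vsval (Ti (vsproj S' y))); first exact: subvsP.
by rewrite dsumE ?subvsP // /Tf vsvalK TiK vsprojK.
Qed.

End LocalMaps.

Unset Implicit Arguments.

Theorem lemma1 (M : finType) (n : nat) (own : 'I_n -> M)
    (S S' : {vspace G 'I_n}) :
  (exists u : forall alpha : M, G (Qub own alpha) -> G (Qub own alpha),
      (forall alpha, is_Sp (u alpha)) /\
      (forall y : G 'I_n, y \in S' <-> exists2 x, x \in S & y = dsum own u x))
  <->
  (exists T : subvs_of S -> subvs_of S',
      [/\ linear T, bijective T,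
          (forall (f g : subvs_of S) (alpha : M),
             omega (loc_comp own alpha (vsval (T f))) (loc_comp own alpha (vsval (T g)))
             = omega (loc_comp own alpha (vsval f)) (loc_comp own alpha (vsval g)))
        & (forall (alpha : M) (y : subvs_of S'),
             loc_comp own alpha (vsval y) = 0 <->
             exists x : subvs_of S, loc_comp own alpha (vsval x) = 0 /\ T x = y)]).
Proof.
split; [exact: local_Sp_equivalent_isometric | exact: locally_isometric_Sp_equivalent].
Qed.
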